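(* Let $G,H,L\colon\mathbb{R}^n\to\mathbb{R}^n$ be positive semidefinite linear maps and let $k\in\{1,\dots,n\}$. Assume that $$\left\langle\left(\wedge^k G+\wedge^k H\right)\xi,\xi\right\rangle=\left\langle\left(\wedge^k L\right)\xi,\xi\right\rangle$$ for all decomposable $\xi\in\bigwedge^k\mathbb{R}^n$. Then $\wedge^k G+\wedge^k H=\wedge^k L$.
   Context: $\bigwedge^k\mathbb{R}^n$ is the $k$-th exterior power with the inner product determined by $\langle u_1\wedge\dots\wedge u_k, v_1\wedge\dots\wedge v_k\rangle=\det(\langle u_i,v_j\rangle)_{i,j=1}^k$. For a linear map $A$, $\wedge^k A$ is the induced linear map on $\bigwedge^k\mathbb{R}^n$ with $(\wedge^kA)(v_1\wedge\dots\wedge v_k)=Av_1\wedge\dots\wedge Av_k$. A $k$-vector is decomposable if it is of the form $v_1\wedge\dots\wedge v_k$. *)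

(* Exterior powers of R^n modelled concretely in the
   orthonormal basis e_I (I a k-subset of {0..n-1}, listed increasingly). *)
From HB Require Import structures.
From mathcomp Require Import all_boot all_order all_algebra.
From mathcomp Require Import reals.
Set Implicit Arguments. Unset Strict Implicit. Unset Printing Implicit Defensive.
Import Order.TTheory GRing.Theory Num.Theory.
Local Open Scope ring_scope.

Definition ksub (n k : nat) := {I : {set 'I_n} | #|I| == k}.

(* the increasing enumeration i_0 < ... < i_{k-1} of I *)
Definition kidx (n k : nat) (I : ksub n k) (i : 'I_k) : 'I_n :=
  enum_val (cast_ord (esym (eqP (valP I))) i).

Section Ext.
Variable R : realType.
Variables n k : nat.

(* /\^k R^n, coordinates w.r.t. the basis e_I = e_{i_0} /\ ... /\ e_{i_{k-1}} *)
Definition extpow := {ffun ksub n k -> R}.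

(* the inner product determined by <u_1/\../\u_k, v_1/\../\v_k> = det(<u_i,v_j>);
   it makes the basis e_I orthonormal *)
Definition ext_dot (xi eta : extpow) : R := \sum_(I : ksub n k) xi I * eta I.

(* v_0 /\ ... /\ v_{k-1}: its e_I-coordinate is the k x k minor on rows I *)
Definition wedge_vecs (v : 'I_k -> 'cV[R]_n) : extpow :=
  [ffun I => \det (\matrix_(i < k, j < k) v j (kidx I i) ord0)].

Definition decomposable (xi : extpow) : Prop :=
  exists v : 'I_k -> 'cV[R]_n, xi = wedge_vecs v.

(* /\^k A (for the linear map x |-> A *m x): (/\^k A) e_J = sum_I det A[I,J] e_I,
   so that (/\^k A)(v_1/\../\v_k) = A v_1 /\ ../\ A v_k (Cauchy--Binet). *)
Definition wedge_pow (A : 'M[R]_n) (xi : extpow) : extpow :=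
  [ffun I => \sum_(J : ksub n k)
              \det (\matrix_(i < k, j < k) A (kidx I i) (kidx J j)) * xi J].

End Ext.

Definition psd (R : realType) (n : nat) (A : 'M[R]_n) : Prop :=
  A^T = A /\ forall x : 'cV[R]_n, 0 <= (x^T *m A *m x) ord0 ord0.

From mathcomp Require Import all_boot all_order all_algebra.
From mathcomp Require Import reals.
From mathcomp Require Import ring.
From mathcomp Require Import fingroup perm.
(* By polarisation, a symmetric matrix is A = sum_m w_m b_m b_m^T, and multilinearity of
   minors then gives  k! /\^k A = sum_f (prod_a w_(f a)) xi_f xi_f^T  over all maps
   f : 'I_k -> m, where xi_f = b_(f 0) /\ ... /\ b_(f (k-1)) is decomposable.  Hence
   N := /\^k G + /\^k H - /\^k L, whose quadratic form vanishes on decomposable vectors, is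
   orthogonal (for the trace inner product of matrices) to /\^k A for every symmetric A:
   to /\^k G, /\^k H and /\^k L, hence to N itself, so N = 0. *)

Set Implicit Arguments.
Unset Strict Implicit.
Unset Printing Implicit Defensive.

Import Order.TTheory GRing.Theory Num.Theory.
Local Open Scope ring_scope.

Lemma sum_mul_delta (R : pzSemiRingType) (T : finType) (F : T -> R) j :
  \sum_q F q * (j == q)%:R = F j.
Proof.
rewrite (bigD1 j) //= eqxx mulr1 big1 ?addr0 // => q /negbTE.
by rewrite eq_sym => ->; rewrite mulr0.
Qed.

Section PolarDecomposition.
Variables (R : numFieldType) (n : nat).

Definition polar_index := ('I_n * 'I_n * bool)%type.

Definition polar_sign (s : bool) : R := if s then 1 else -1.

Definition polar_vec (m : polar_index) : 'cV[R]_n :=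
  \col_i ((i == m.1.1)%:R + polar_sign m.2 * (i == m.1.2)%:R).

Definition polar_weight (A : 'M[R]_n) (m : polar_index) : R :=
  polar_sign m.2 * A m.1.1 m.1.2 / 4%:R.

(* Polarisation:
   [(e_p + e_q)(e_p + e_q)^T - (e_p - e_q)(e_p - e_q)^T = 2 (e_p e_q^T + e_q e_p^T)]. *)
Lemma sym_mx_polar_sum (A : 'M[R]_n) : A^T = A ->
  A = \sum_(m : polar_index)
        polar_weight A m *: (polar_vec m *m (polar_vec m)^T).
Proof.
move=> symA; apply/matrixP => i j; rewrite summxE.
have -> : \sum_(m : polar_index)
     (polar_weight A m *: (polar_vec m *m (polar_vec m)^T)) i j
  = \sum_p \sum_q (A p q / 2%:R * (i == p)%:R * (j == q)%:R
                   + A p q / 2%:R * (j == p)%:R * (i == q)%:R).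
  rewrite pair_bigA; transitivity (\sum_(pq : 'I_n * 'I_n) \sum_(s : bool)
    (polar_weight A (pq, s) *:
       (polar_vec (pq, s) *m (polar_vec (pq, s))^T)) i j).
    by rewrite pair_bigA; apply: eq_bigr => -[].
  apply: eq_bigr => pq _.
  by rewrite big_bool /polar_weight /= !mxE !big_ord1 !mxE /=; field.
under eq_bigr => p _ do rewrite big_split /= 2!sum_mul_delta.
rewrite big_split /= 2!sum_mul_delta.
have -> : A j i = A i j by rewrite -{1}symA mxE.
by field.
Qed.

End PolarDecomposition.

Arguments polar_vec {R n}.

Section Wedge.
Variables (R : realType) (n k : nat).
Implicit Types (I J : ksub n k) (v : 'I_k -> 'cV[R]_n).

Definition wedge_mx (A : 'M[R]_n) I J : R :=
  \det (\matrix_(i < k, j < k) A (kidx I i) (kidx J j)).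

Lemma eq_wedge_vecs v v' : v =1 v' -> wedge_vecs v = wedge_vecs v'.
Proof.
move=> eq_v; apply/ffunP => I; rewrite !ffunE; congr (\det _).
by apply/matrixP => i j; rewrite !mxE eq_v.
Qed.

Lemma wedge_vecsE v I :
  wedge_vecs v I = \sum_(s : 'S_k) (-1) ^+ s * \prod_a v (s a) (kidx I a) ord0.
Proof.
rewrite ffunE /determinant; apply: eq_bigr => s _; congr (_ * _).
by apply: eq_bigr => a _; rewrite mxE.
Qed.

Lemma wedge_vecsE_tr v I :
  wedge_vecs v I = \sum_(s : 'S_k) (-1) ^+ s * \prod_a v a (kidx I (s a)) ord0.
Proof.
rewrite ffunE -det_tr /determinant; apply: eq_bigr => s _; congr (_ * _).
by apply: eq_bigr => a _; rewrite !mxE.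
Qed.

Lemma wedge_vecs_perm v (s : 'S_k) I :
  wedge_vecs (v \o s) I = (-1) ^+ s * wedge_vecs v I.
Proof.
rewrite !ffunE.
have -> : \matrix_(i, j) (v \o s) j (kidx I i) ord0
          = col_perm s (\matrix_(i, j) v j (kidx I i) ord0).
  by apply/matrixP => i j; rewrite !mxE.
by rewrite col_permE det_mulmx det_perm odd_permV mulrC.
Qed.

End Wedge.

Section RankOneSum.
Variables (R : realType) (n k : nat) (T : finType).
Variables (w : T -> R) (b : T -> 'cV[R]_n).
Implicit Types (I J : ksub n k).

Local Notation A := (\sum_m w m *: (b m *m (b m)^T)).

Lemma wedge_mx_sum_rank1 I J :
  wedge_mx A I J = \sum_(f : {ffun 'I_k -> T})
    (\prod_a (w (f a) * b (f a) (kidx I a) ord0)) * wedge_vecs (b \o f) J.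
Proof.
have entryA i j : A i j = \sum_m w m * b m i ord0 * b m j ord0.
  by rewrite summxE; apply: eq_bigr => m _; rewrite !mxE big_ord1 !mxE mulrA.
rewrite /wedge_mx /determinant.
under eq_bigr => s _.
  under eq_bigr => a _ do rewrite mxE entryA.
  rewrite bigA_distr_bigA mulr_sumr.
  over.
rewrite exchange_big /=; apply: eq_bigr => f _.
rewrite wedge_vecsE_tr mulr_sumr; apply: eq_bigr => s _.
by rewrite mulrCA -big_split.
Qed.

(* Summing over the reorderings [f \o s] of [f] antisymmetrises the row factor of
   [wedge_mx_sum_rank1] into [wedge_vecs (b \o f) I]. *)
Lemma wedge_mx_sum_rank1_sym I J :
  k`!%:R * wedge_mx A I J = \sum_(f : {ffun 'I_k -> T})
    (\prod_a w (f a)) * wedge_vecs (b \o f) I * wedge_vecs (b \o f) J.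
Proof.
rewrite mulr_natl -card_Sn -sumr_const.
transitivity (\sum_(s : 'S_k) \sum_(f : {ffun 'I_k -> T}) (\prod_a w (f a)) *
  ((-1) ^+ s * \prod_a b (f (s a)) (kidx I a) ord0) * wedge_vecs (b \o f) J).
  apply: eq_bigr => s _; rewrite wedge_mx_sum_rank1.
  have precomp_inj :
      injective (fun f : {ffun 'I_k -> T} => [ffun a => f (s a)]).
    move=> f1 f2 /ffunP eq_f; apply/ffunP => a.
    by have := eq_f (s^-1 a)%g; rewrite !ffunE permKV.
  rewrite (reindex_inj precomp_inj) /=; apply: eq_bigr => f _.
  rewrite (eq_wedge_vecs (v' := (b \o f) \o s)) => [|a]; last first.
    by rewrite /= ffunE.
  under eq_bigr => a _ do rewrite ffunE.
  rewrite wedge_vecs_perm big_split /=.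
  rewrite [in RHS](reindex_inj (@perm_inj _ s)) /=.
  by rewrite -!mulrA; congr (_ * _); rewrite mulrCA.
rewrite exchange_big /=; apply: eq_bigr => f _.
by rewrite (wedge_vecsE (b \o f) I) -mulr_suml -mulr_sumr.
Qed.

End RankOneSum.

Section Orthogonality.
Variables (R : realType) (n k : nat).
Implicit Types (N : ksub n k -> ksub n k -> R) (xi : extpow R n k).

Definition ext_form N xi : R := \sum_I \sum_J N I J * xi I * xi J.

Lemma wedge_mx_orthogonal N :
  (forall v : 'I_k -> 'cV[R]_n, ext_form N (wedge_vecs v) = 0) ->
  forall A : 'M[R]_n, A^T = A -> \sum_I \sum_J N I J * wedge_mx A I J = 0.
Proof.
move=> N_form0 A symA.
have kfact_neq0 : k`!%:R != 0 :> R by rewrite pnatr_eq0 -lt0n fact_gt0.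
apply: (mulfI kfact_neq0); rewrite mulr0.
have -> : wedge_mx A =
    wedge_mx (\sum_m polar_weight A m *: (polar_vec m *m (polar_vec m)^T)).
  by rewrite -sym_mx_polar_sum.
transitivity (\sum_(f : {ffun 'I_k -> polar_index n})
  (\prod_a polar_weight A (f a)) * ext_form N (wedge_vecs (polar_vec \o f))).
  rewrite /ext_form mulr_sumr.
  under [RHS]eq_bigr => f _ do rewrite mulr_sumr.
  rewrite [RHS]exchange_big /=; apply: eq_bigr => I _.
  rewrite mulr_sumr.
  under [RHS]eq_bigr => f _ do rewrite mulr_sumr.
  rewrite [RHS]exchange_big /=; apply: eq_bigr => J _.
  rewrite mulrCA wedge_mx_sum_rank1_sym mulr_sumr.
  by apply: eq_bigr => f _; ring.
by rewrite big1 // => f _; rewrite N_form0 mulr0.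
Qed.

End Orthogonality.

Lemma sum2_sqr_eq0 (R : realDomainType) (T : finType) (F : T -> T -> R) :
  \sum_i \sum_j F i j ^+ 2 = 0 -> forall i j, F i j = 0.
Proof.
move=> sum0 i j; apply/eqP; rewrite -sqrf_eq0; apply/eqP.
have row0 : \sum_j F i j ^+ 2 = 0.
  apply: (psumr_eq0P _ sum0) => // i' _.
  by apply: sumr_ge0 => j' _; apply: sqr_ge0.
by apply: (psumr_eq0P _ row0) => // j' _; apply: sqr_ge0.
Qed.

Theorem lemma3p1 (R : realType) (n k : nat) (G H L : 'M[R]_n) :
  psd G -> psd H -> psd L -> (1 <= k <= n)%N ->
  (forall xi : extpow R n k, decomposable xi ->
     ext_dot (wedge_pow G xi + wedge_pow H xi) xi
     = ext_dot (wedge_pow L xi) xi) ->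
  forall xi : extpow R n k, wedge_pow G xi + wedge_pow H xi = wedge_pow L xi.
Proof.
move=> [symG _] [symH _] [symL _] _ hyp xi.
pose N (I J : ksub n k) := wedge_mx G I J + wedge_mx H I J - wedge_mx L I J.
have N_form0 v : ext_form N (wedge_vecs v) = 0.
  move: (hyp _ (ex_intro _ v erefl)); rewrite /ext_dot => /eqP.
  rewrite -subr_eq0 -sumrB => /eqP <-; apply: eq_bigr => I _.
  rewrite -mulrBl ffunE !ffunE -big_split -sumrB mulr_suml.
  apply: eq_bigr => J _.
  by rewrite /N mulrAC; congr (_ * _); rewrite mulrBl mulrDl.
have N_orth := wedge_mx_orthogonal N_form0.
have N0 : forall I J, N I J = 0.
  apply: sum2_sqr_eq0.
  transitivity (\sum_I \sum_J N I J * wedge_mx G I J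
                + \sum_I \sum_J N I J * wedge_mx H I J
                - \sum_I \sum_J N I J * wedge_mx L I J).
    rewrite -big_split -sumrB; apply: eq_bigr => I _.
    rewrite -big_split -sumrB; apply: eq_bigr => J _.
    by rewrite expr2 {2}/N mulrBr mulrDr.
  by rewrite !N_orth // addr0 subr0.
apply/ffunP => I; rewrite ffunE !ffunE -big_split; apply: eq_bigr => J _ /=.
by rewrite -mulrDl; move/eqP: (N0 I J); rewrite subr_eq0 => /eqP ->.
Qed.
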